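(* Let $m\ge 1$ and let $\Sigma=\begin{pmatrix}2I_{m+1} & I_{m+1}\\ I_{m+1} & 2I_{m+1}\end{pmatrix}\in\mathbb{R}^{(2m+2)\times(2m+2)}$, where $I_{m+1}$ is the $(m+1)\times(m+1)$ identity matrix. Then every $(2m+1)\times(2m+1)$ principal submatrix of $\Sigma$ belongs to $F_{2m+1,m}$, but $\Sigma\notin F_{2m+2,m}$.
   Context: For integers $p\ge 1$, $m\ge 1$, $F_{p,m}=\{\Delta+\Gamma\Gamma^t : \Delta \text{ a positive definite diagonal } p\times p \text{ matrix},\ \Gamma\in\mathbb{R}^{p\times m}\}$. *)

(* real numbers generalized to an arbitrary real closed field. *)
From HB Require Import structures.
From mathcomp Require Import all_boot all_order all_algebra.
Set Implicit Arguments. Unset Strict Implicit. Unset Printing Implicit Defensive.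
Import Order.TTheory GRing.Theory Num.Theory.
Local Open Scope ring_scope.

(* S \in F_{p,m}: S = Delta + Gamma Gamma^T with Delta a positive definite
   diagonal p x p matrix (diagonal with positive diagonal entries) and
   Gamma a p x m matrix. *)
Definition inF (R : rcfType) (p m : nat) (S : 'M[R]_p) : Prop :=
  exists (d : 'rV[R]_p) (G : 'M[R]_(p, m)),
    (forall i : 'I_p, 0 < d 0 i) /\ S = diag_mx d + G *m G^T.

Definition Sigma (R : rcfType) (m : nat) : 'M[R]_(m.+1 + m.+1) :=
  block_mx (2%:M) (1%:M) (1%:M) (2%:M).

From HB Require Import structures.
From mathcomp Require Import all_boot all_order all_algebra.
Set Implicit Arguments. Unset Strict Implicit. Unset Printing Implicit Defensive.
Import Order.TTheory GRing.Theory Num.Theory.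
Local Open Scope ring_scope.

(* Both halves rest on the factorization Sigma = I + C C^T, where the
   (2m+2) x (m+1) matrix C stacks two identities: column c of C is supported
   exactly on the twin rows c and c + m + 1.

   Membership of the principal submatrices: deleting row and column k gives
   I + C' C'^T with C' = C minus row k.  The column of C' that contained k is
   now supported on the single twin of k, so its contribution to C' C'^T is
   diagonal; moving it into the diagonal part leaves a Gram matrix of the
   m remaining columns, i.e. an element of F_{2m+1,m}.

   Non-membership: if Sigma = diag(d) + G G^T with G of width m, the upper
   right block I_{m+1} of Sigma equals A B^T for the two row blocks A, B of G,
   so the identity of size m+1 factors through R^m, contradicting rank. *)

Section Gram.
Variable R : rcfType.

Lemma principal_diag_gram p q (d : 'rV[R]_p) (M : 'M[R]_(p, q)) k :
  row' k (col' k (diag_mx d + M *m M^T))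
  = diag_mx (col' k d) + row' k M *m (row' k M)^T.
Proof.
apply/matrixP => i i'; rewrite !mxE (inj_eq (@lift_inj _ k)).
by congr (_ + _); apply: eq_bigr => l _; rewrite !mxE.
Qed.

Lemma row'_column_support p q (M : 'M[R]_(p, q)) j k k' :
  (forall a, M a j != 0 -> a = k \/ a = k') ->
  forall i i', i != i' -> row' k M i j * row' k M i' j = 0.
Proof.
move=> supp i i' ne_ii'; rewrite !mxE.
have to_twin l : M (lift k l) j != 0 -> lift k l = k'.
  by case/supp => // /esym/eqP; rewrite (negbTE (neq_lift _ _)).
have [->|/to_twin Ei] := eqVneq (M (lift k i) j) 0; first by rewrite mul0r.
have [->|/to_twin Ei'] := eqVneq (M (lift k i') j) 0; first by rewrite mulr0.
by move: ne_ii'; rewrite -(inj_eq (@lift_inj _ k)) Ei Ei' eqxx.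
Qed.

(* A column of M whose entries have pairwise disjoint supports contributes
   a diagonal term to M M^T; absorbing it into the diagonal leaves a Gram
   matrix with one column fewer. *)
Lemma inF_drop_column p m (d : 'rV[R]_p) (M : 'M[R]_(p, m.+1)) j :
  (forall i, 0 < d 0 i) -> (forall i i', i != i' -> M i j * M i' j = 0) ->
  inF m (diag_mx d + M *m M^T).
Proof.
move=> d_gt0 disjoint_j.
exists (d + \row_i M i j ^+ 2), (col' j M); split.
  by move=> i; rewrite !mxE ltr_wpDr ?sqr_ge0.
apply/matrixP => i i'; rewrite !mxE (bigD1_ord j) //= mulrnDl -addrA.
congr (_ + (_ + _)).
- have [<-|ne_ii'] := eqVneq i i'; first by rewrite mxE mulr1n expr2.
  by rewrite mxE mulr0n disjoint_j.
- by apply: eq_bigr => l _; rewrite !mxE.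
Qed.

Lemma ursubmx_diag_gram p1 p2 m (d : 'rV[R]_(p1 + p2)) (G : 'M[R]_(p1 + p2, m)) :
  ursubmx (diag_mx d + G *m G^T) = usubmx G *m (dsubmx G)^T.
Proof.
apply/matrixP => i j; rewrite !mxE eq_lrshift mulr0n add0r.
by apply: eq_bigr => l _; rewrite !mxE.
Qed.

Lemma identity_factor_le n m (A : 'M[R]_(n, m)) (B : 'M[R]_(m, n)) :
  A *m B = 1%:M -> (n <= m)%N.
Proof.
move=> AB; have := mxrankM_maxl A B.
by rewrite AB mxrank1 => /leq_trans; apply; apply: rank_leq_col.
Qed.
End Gram.

Definition stacked_id (R : rcfType) n : 'M[R]_(n + n, n) := col_mx 1%:M 1%:M.

Lemma stacked_id_support (R : rcfType) n (k : 'I_(n + n)) :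
  exists j k', forall a, stacked_id R n a j != 0 -> a = k \/ a = k'.
Proof.
rewrite -(splitK k); case: (split k) => c /=; exists c;
  [exists (rshift n c) | exists (lshift n c)] => a;
  rewrite -(splitK a); case: (split a) => b /=;
  rewrite ?col_mxEu ?col_mxEd mxE;
  have [->|_] := eqVneq b c; rewrite ?eqxx //; auto.
Qed.

Lemma Sigma_gram (R : rcfType) m :
  Sigma R m = diag_mx (const_mx 1) + stacked_id R m.+1 *m (stacked_id R m.+1)^T.
Proof.
rewrite diag_const_mx /stacked_id tr_col_mx trmx1 mul_col_mx !mul_mx_row !mul1mx.
by rewrite (scalar_mx_block m.+1 m.+1) add_block_mx !add0r -raddfD.
Qed.

Theorem mainTheorem8 (R : rcfType) (m : nat) (hm : (1 <= m)%N) :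
  (forall k : 'I_(m.+1 + m.+1),
      inF m (row' k (col' k (Sigma R m))))
  /\ ~ inF m (Sigma R m).
Proof.
split.
- move=> k; rewrite Sigma_gram principal_diag_gram.
  have [j [k' supp]] := stacked_id_support R k.
  apply: (inF_drop_column (j := j)); first by move=> i; rewrite !mxE ltr01.
  exact: row'_column_support supp.
- move=> [d [G [_ decomp]]].
  have cross : usubmx G *m (dsubmx G)^T = 1%:M.
    by rewrite -(ursubmx_diag_gram d) -decomp /Sigma block_mxKur.
  by have := identity_factor_le cross; rewrite ltnn.
Qed.
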